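(* Let $C$ be a circle graph and $K\subseteq V(C)$ an independent set such that $K$ contains at least one vertex of degree at least $2$ in $C$ and no two vertices of $K$ are twins in $C$. Then there exist distinct vertices $a,b\in V(C)\setminus K$ such that $|N_C(a)\cap N_C(b)\cap K|=1$.
   Context: Graphs are finite, simple, undirected. A circle graph is a graph isomorphic to the intersection graph of a finite set of chords of a circle (vertices are chords, two vertices adjacent iff the chords intersect). $N_C(u)$ denotes the neighbourhood of $u$. A set is independent if no two of its vertices are adjacent. Two vertices $u,v$ are twins if $N_C(u)\setminus\{v\}=N_C(v)\setminus\{u\}$. *)

From mathcomp Require Import all_boot.
Set Implicit Arguments. Unset Strict Implicit. Unset Printing Implicit Defensive.

Definition simple_graph (T : finType) (e : rel T) : Prop :=
  symmetric e /\ irreflexive e.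

Definition nbhd (T : finType) (e : rel T) (u : T) : {set T} := [set v | e u v].

(* Chords of a circle, combinatorially: the circle is cut at a point not
   used as an endpoint, so the endpoints of the chords become points of a
   line (positions in nat, in circular order).  A chord is a pair (x, y)
   with x < y.  Two chords with pairwise distinct endpoints intersect iff
   their endpoints interleave. *)
Definition chords_cross (c d : nat * nat) : bool :=
  ((c.1 < d.1) && (d.1 < c.2) && (c.2 < d.2)) ||
  ((d.1 < c.1) && (c.1 < d.2) && (d.2 < c.2)).

Definition circle_graph (T : finType) (e : rel T) : Prop :=
  simple_graph e /\
  exists p : T -> nat * nat,
    [/\ forall u, (p u).1 < (p u).2,
        forall u v, u != v ->
          [&& (p u).1 != (p v).1, (p u).1 != (p v).2,
              (p u).2 != (p v).1 & (p u).2 != (p v).2] &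
        forall u v, u != v -> e u v = chords_cross (p u) (p v)].

Definition independent (T : finType) (e : rel T) (K : {set T}) : Prop :=
  forall u v, u \in K -> v \in K -> ~~ e u v.

Definition twins (T : finType) (e : rel T) (u v : T) : Prop :=
  nbhd e u :\ v = nbhd e v :\ u.

From mathcomp Require Import all_boot zify.

(* Start from two neighbours a, b of a vertex of K of degree at least 2 and
   shrink their common K-neighbourhood until it is a single vertex.  If a, b
   have two common K-neighbours x, y, a vertex r adjacent to x but not to y
   (x, y are not twins) replaces a or b: the common K-neighbourhood of r and a
   (or of r and b) lies inside that of a and b, contains x and misses y.
   Otherwise r, a, b and four chords x, y, f, g of K form the configuration
   excluded by [exchange_free].  In a chord model this configuration cannot
   occur: a chord crossing u but not m lies on the side of m containing u, so
   the crossing pattern yields three chords of K, no one of which separates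
   the other two, all crossed by one of a, b, r.  That is impossible, since
   two of them would see the same endpoint of the crossing chord on their far
   sides, and the far sides of two non-crossing chords are disjoint. *)

Set Implicit Arguments.
Unset Strict Implicit.
Unset Printing Implicit Defensive.

Definition inside (c : nat * nat) (t : nat) : bool := c.1 < t < c.2.

Definition apart (c d : nat * nat) : bool :=
  [&& c.1 != d.1, c.1 != d.2, c.2 != d.1 & c.2 != d.2].

Lemma chords_cross_inside (c d : nat * nat) : d.1 < d.2 -> apart c d ->
  chords_cross c d = (inside c d.1 != inside c d.2).
Proof. case: c d => c1 c2 [d1 d2]; rewrite /chords_cross /apart /inside /=; lia. Qed.

Lemma noncrossing_beyond (c d : nat * nat) t : c.1 < c.2 -> d.1 < d.2 ->
  apart c d -> ~~ chords_cross c d ->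
  ~~ ((inside c t != inside c d.1) && (inside d t != inside d c.1)).
Proof. case: c d => c1 c2 [d1 d2]; rewrite /chords_cross /apart /inside /=; lia. Qed.

Definition exchange_free (T : finType) (e : rel T) (K : {set T}) : Prop :=
  forall x y f g a b r, x \in K -> y \in K -> f \in K -> g \in K ->
    e a x -> e a y -> e a f -> ~~ e a g ->
    e b x -> e b y -> e b g -> ~~ e b f ->
    e r x -> e r f -> e r g -> ~~ e r y -> False.

Section ChordModel.

Variables (T : finType) (e : rel T) (K : {set T}) (p : T -> nat * nat).
Hypotheses (e_sym : symmetric e) (e_irr : irreflexive e) (indepK : independent e K).
Hypotheses (p_wf : forall u, (p u).1 < (p u).2)
  (p_apart : forall u v, u != v -> apart (p u) (p v))
  (e_cross : forall u v, u != v -> e u v = chords_cross (p u) (p v)).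

(* The side of chord [u] on which chord [v] lies, when they do not cross. *)
Let side u v := inside (p u) (p v).1.

Lemma edge_inside z u : e z u = (inside (p u) (p z).1 != inside (p u) (p z).2).
Proof.
rewrite e_sym; have [<-|uz] := eqVneq u z.
  by rewrite e_irr /inside !ltnn andbF.
by rewrite e_cross // chords_cross_inside ?p_apart.
Qed.

Lemma beyond_each_other t u v : u != v -> ~~ e u v ->
  ~~ ((inside (p u) t != side u v) && (inside (p v) t != side v u)).
Proof. by move=> uv; rewrite e_cross //; apply: noncrossing_beyond; rewrite ?p_apart. Qed.

Lemma crossed_side u m z : ~~ e u m -> e z u -> ~~ e z m ->
  inside (p m) (p z).1 = side m u.
Proof.
move=> n_um zu zm; have um : u != m by apply: contraNneq zm => <-.
move: zu zm; rewrite !edge_inside.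
have := beyond_each_other (p z).1 um n_um; have := beyond_each_other (p z).2 um n_um.
rewrite /side.
by move: (inside (p u) (p z).1) (inside (p u) (p z).2) (inside (p u) (p m).1)
  (inside (p m) (p z).1) (inside (p m) (p z).2) (inside (p m) (p u).1) => [] [] [] [] [] [].
Qed.

Lemma uncrossed_not_separating u v m z : u \in K -> v \in K -> m \in K ->
  e z u -> e z v -> ~~ e z m -> side m u = side m v.
Proof.
move=> Ku Kv Km zu zv zm.
by rewrite -(crossed_side (indepK Ku Km) zu zm) (crossed_side (indepK Kv Km) zv zm).
Qed.

Lemma no_chord_crosses_three c1 c2 c3 z :
  c1 \in K -> c2 \in K -> c3 \in K -> c1 != c2 -> c1 != c3 -> c2 != c3 ->
  side c1 c2 = side c1 c3 -> side c2 c1 = side c2 c3 -> side c3 c1 = side c3 c2 ->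
  e z c1 -> e z c2 -> e z c3 -> False.
Proof.
move=> K1 K2 K3 n12 n13 n23 s1 s2 s3; rewrite !edge_inside.
have := beyond_each_other (p z).1 n12 (indepK K1 K2).
have := beyond_each_other (p z).2 n12 (indepK K1 K2).
have := beyond_each_other (p z).1 n13 (indepK K1 K3).
have := beyond_each_other (p z).2 n13 (indepK K1 K3).
have := beyond_each_other (p z).1 n23 (indepK K2 K3).
have := beyond_each_other (p z).2 n23 (indepK K2 K3).
rewrite -s1 -s2 -s3 /side.
by move: (inside (p c1) (p z).1) (inside (p c1) (p z).2) (inside (p c1) (p c2).1)
  (inside (p c2) (p z).1) (inside (p c2) (p z).2) (inside (p c2) (p c1).1)
  (inside (p c3) (p z).1) (inside (p c3) (p z).2) (inside (p c3) (p c1).1)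
  => [] [] [] [] [] [] [] [] [].
Qed.

Lemma circle_model_exchange_free : exchange_free e K.
Proof.
move=> x y f g a b r Kx Ky Kf Kg ax ay af ag bx b_y bg bf rx rf rg ry.
have neq u v w : e w u -> ~~ e w v -> u != v by move=> wu; apply: contraNneq => <-.
have : [|| side x y == side x f, side x y == side x g | side x f == side x g].
  by case: (side x y); case: (side x f); case: (side x g).
case/or3P => /eqP sx.
- apply: (no_chord_crosses_three Kx Ky Kf (neq _ _ _ rx ry) (neq _ _ _ bx bf)
    (neq _ _ _ b_y bf) sx _ _ ax ay af).
    exact: (uncrossed_not_separating Kx Kf Ky rx rf ry).
  exact: (uncrossed_not_separating Kx Ky Kf bx b_y bf).
- apply: (no_chord_crosses_three Kx Ky Kg (neq _ _ _ rx ry) (neq _ _ _ ax ag)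
    (neq _ _ _ ay ag) sx _ _ bx b_y bg).
    exact: (uncrossed_not_separating Kx Kg Ky rx rg ry).
  exact: (uncrossed_not_separating Kx Ky Kg ax ay ag).
- apply: (no_chord_crosses_three Kx Kf Kg (neq _ _ _ bx bf) (neq _ _ _ ax ag)
    (neq _ _ _ af ag) sx _ _ rx rf rg).
    exact: (uncrossed_not_separating Kx Kg Kf bx bg bf).
  exact: (uncrossed_not_separating Kx Kf Kg ax af ag).
Qed.

End ChordModel.

Definition common (T : finType) (e : rel T) (K : {set T}) (a b : T) : {set T} :=
  nbhd e a :&: nbhd e b :&: K.

Section Descent.

Variables (T : finType) (e : rel T) (K : {set T}).
Hypotheses (e_sym : symmetric e) (e_irr : irreflexive e) (indepK : independent e K).
Hypothesis no_twins : forall u v, u \in K -> v \in K -> u != v -> ~ twins e u v.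
Hypothesis exchange_freeK : exchange_free e K.

Local Notation common := (common e K).

Lemma neighbour_notin u v : u \in K -> e u v -> v \notin K.
Proof. by move=> Ku; apply: contraTN => Kv; apply: indepK. Qed.

Lemma distinguishing_vertex x y : ~ twins e x y -> exists r, e x r != e y r.
Proof.
move=> ntw; apply/existsP; apply: contraT; rewrite negb_exists => /forallP same.
case: ntw; apply/setP => v; rewrite !inE.
have [->|vy] := eqVneq v y; first by rewrite e_irr andbF.
have [->|vx] := eqVneq v x; first by rewrite e_irr andbF.
by move/negPn/eqP: (same v) => ->.
Qed.

Lemma common_shrinks a b x y r :
  x \in common a b -> y \in common a b -> e x r -> ~~ e y r ->
  (common r a \subset common a b) || (common r b \subset common a b).
Proof.
rewrite !inE => /andP [/andP [ax bx] Kx] /andP [/andP [ay b_y] Ky] xr yr.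
apply: contraT; rewrite negb_or => /andP [/subsetPn [f fra nfab] /subsetPn [g grb ngab]].
move: fra grb nfab ngab; rewrite !inE => /andP [/andP [rf af] Kf] /andP [/andP [rg bg] Kg].
rewrite af Kf bg Kg !andbT /= => bf ag.
rewrite ![e _ r]e_sym in xr yr.
by case: (exchange_freeK Kx Ky Kf Kg ax ay af ag bx b_y bg bf xr rf rg yr).
Qed.

Lemma common_descent a b : a \notin K -> b \notin K -> 1 < #|common a b| ->
  exists r c, [/\ r != c, r \notin K, c \notin K, 0 < #|common r c|
                 & #|common r c| < #|common a b|].
Proof.
move=> Ka Kb /card_gt1P [x0 [y0 [x0ab y0ab x0y0]]].
have inK u : u \in common a b -> u \in K by rewrite !inE => /andP [].
have [r dist_r] := distinguishing_vertex (no_twins (inK _ x0ab) (inK _ y0ab) x0y0).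
have {x0 y0 x0ab y0ab x0y0 dist_r} [x [y [xab yab xr yr]]] :
    exists x y, [/\ x \in common a b, y \in common a b, e x r & ~~ e y r].
  by move: dist_r; case xr: (e x0 r); case yr: (e y0 r) => // _;
     [exists x0, y0 | exists y0, x0]; rewrite xr yr.
have [c c_ab c_sub] : exists2 c, c \in [:: a; b] & common r c \subset common a b.
  by case/orP: (common_shrinks xab yab xr yr); [exists a | exists b];
     rewrite ?inE ?eqxx ?orbT.
have c_adj u : u \in common a b -> e c u.
  by move: c_ab; rewrite !inE => /pred2P [] -> /andP [/andP []].
exists r, c; split.
- by apply: contraNneq yr => ->; rewrite e_sym c_adj.
- exact: neighbour_notin (inK _ xab) xr.
- by move: c_ab; rewrite !inE => /pred2P [] ->.
- by apply/card_gt0P; exists x; rewrite !inE -e_sym xr c_adj ?inK.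
- apply: proper_card; apply/properP; split => //; exists y => //.
  by rewrite !inE -e_sym (negbTE yr).
Qed.

Lemma common_singleton a b : a != b -> a \notin K -> b \notin K -> 0 < #|common a b| ->
  exists a' b', [/\ a' != b', a' \notin K, b' \notin K & #|common a' b'| = 1].
Proof.
have [n] := ubnP #|common a b|; elim: n a b => // n IHn a b lt_n ab Ka Kb pos.
have [le1|gt1] := leqP #|common a b| 1.
  by exists a, b; split => //; apply/eqP; rewrite eqn_leq le1.
have [r [c [rc Kr Kc pos' lt']]] := common_descent Ka Kb gt1.
exact: (IHn r c (leq_trans lt' lt_n)).
Qed.

End Descent.

Theorem mainTheorem2 (T : finType) (e : rel T) (K : {set T}) :
  circle_graph e ->
  independent e K ->
  (exists2 k, k \in K & 2 <= #|nbhd e k|) ->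
  (forall u v, u \in K -> v \in K -> u != v -> ~ twins e u v) ->
  exists a b : T,
    [/\ a != b, a \notin K, b \notin K &
        #|nbhd e a :&: nbhd e b :&: K| = 1].
Proof.
case=> [[e_sym e_irr] [p [p_wf p_apart e_cross]]] indepK [k Kk deg_k] no_twins.
have exK := circle_model_exchange_free e_sym e_irr indepK p_wf p_apart e_cross.
case/card_gt1P: deg_k => a [b [ka kb ab]]; rewrite !inE in ka kb.
apply: (common_singleton e_sym e_irr indepK no_twins exK ab).
- exact: (neighbour_notin indepK Kk ka).
- exact: (neighbour_notin indepK Kk kb).
- by apply/card_gt0P; exists k; rewrite !inE -!(e_sym k) ka kb Kk.
Qed.
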